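(* Every tame topological Kuranishi atlas $\mathcal K$ has a reduction.
   Context: Notation: for subsets $V'\subset V$ of a topological space, $V'\sqsubset V$ means the closure of $V'$ in $V$ is compact. $X$ is a compact metrizable space. Charts: a topological Kuranishi chart for $X$ with open footprint $F\subset X$ is a tuple $\mathbf K=(U,\mathbb E,\mathfrak s,\psi)$ where $U$ is a separable, locally compact, metrizable space; $\mathbb E$ is a separable, locally compact, metrizable space with continuous maps $\mathrm{pr}:\mathbb E\to U$ and $0:U\to\mathbb E$ with $\mathrm{pr}\circ0=\mathrm{id}_U$; $\mathfrak s:U\to\mathbb E$ is continuous with $\mathrm{pr}\circ\mathfrak s=\mathrm{id}_U$; and $\psi$ is a homeomorphism from $\mathfrak s^{-1}(0):=\{x\in U:\mathfrak s(x)=0(x)\}$ onto $F$. Coordinate changes: for charts $\mathbf K_I,\mathbf K_J$ with $F_I\cap F_J\neq\emptyset$, a coordinate change $\widehat\Phi_{IJ}:\mathbf K_I\to\mathbf K_J$ consists of an open set $U_{IJ}\subset U_I$ with $U_{IJ}\cap\mathfrak s_I^{-1}(0_I)=\psi_I^{-1}(F_I\cap F_J)$ and a topological embedding $\widehat\Phi_{IJ}:\mathrm{pr}_I^{-1}(U_{IJ})\to\mathbb E_J$ such that there is a topological embedding $\phi_{IJ}:U_{IJ}\to U_J$ with $\mathrm{pr}_J\circ\widehat\Phi_{IJ}=\phi_{IJ}\circ\mathrm{pr}_I$, $0_J\circ\phi_{IJ}=\widehat\Phi_{IJ}\circ0_I$ and $\mathfrak s_J\circ\phi_{IJ}=\widehat\Phi_{IJ}\circ\mathfrak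 s_I$ on $U_{IJ}$, and $\phi_{IJ}=\psi_J^{-1}\circ\psi_I$ on $U_{IJ}\cap\mathfrak s_I^{-1}(0_I)$. Atlases: a covering family of basic charts is a finite family $(\mathbf K_i)_{i=1,\dots,N}$ of charts whose footprints cover $X$; $\mathcal I_{\mathcal K}$ is the set of nonempty $I\subset\{1,\dots,N\}$ with $F_I:=\bigcap_{i\in I}F_i\neq\emptyset$. Transition data consist of a chart $\mathbf K_J$ with footprint $F_J$ for each $J\in\mathcal I_{\mathcal K}$ with $|J|\ge2$ (and $\mathbf K_{\{i\}}:=\mathbf K_i$), and a coordinate change $\widehat\Phi_{IJ}:\mathbf K_I\to\mathbf K_J$ for all $I\subsetneq J$ in $\mathcal I_{\mathcal K}$. We set $U_{II}:=U_I$, $\phi_{II}:=\mathrm{id}_{U_I}$. For $I\subsetneq J\subsetneq K$ let $U_{IJK}:=U_{IJ}\cap\phi_{IJ}^{-1}(U_{JK})$. The triple satisfies the weak cocycle condition if $\widehat\Phi_{JK}\circ\widehat\Phi_{IJ}=\widehat\Phi_{IK}$ on $\mathrm{pr}_I^{-1}(U_{IJK}\cap U_{IK})$; the cocycle condition if in addition $U_{IJK}\subset U_{IK}$; the strong cocycle condition if in addition $U_{IJK}=U_{IK}$. A weak topological Kuranishi atlas $\mathcal K$ is a covering family with transition data satisfying the weak cocycle condition for all such triples; a topological Kuranishi atlas is one satisfying the cocycle condition for all triples. Filtrations: a weak topological Kuranishi atlas is filtered if it is equipped with closed subsets $\mathbb E_{IJ}\subset\mathbb E_J$ for all $J\in\mathcal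 I_{\mathcal K}$ and $I\subset J$ (including $I=\emptyset$) such that (i) $\mathbb E_{JJ}=\mathbb E_J$ and $\mathbb E_{\emptyset J}=\mathrm{im}\,0_J$; (ii) $\widehat\Phi_{JK}(\mathrm{pr}_J^{-1}(U_{JK})\cap\mathbb E_{IJ})=\mathbb E_{IK}\cap\mathrm{pr}_K^{-1}(\mathrm{im}\,\phi_{JK})$ for $I\subset J\subsetneq K$; (iii) $\mathbb E_{IJ}\cap\mathbb E_{HJ}=\mathbb E_{(I\cap H)J}$ for $I,H\subset J$; (iv) $\mathrm{im}\,\phi_{IJ}$ is an open subset of $\mathfrak s_J^{-1}(\mathbb E_{IJ})$ for $I\subsetneq J$. Tameness: a filtered weak topological Kuranishi atlas is tame if $U_{IJ}\cap U_{IK}=U_{I(J\cup K)}$ for all $I,J,K\in\mathcal I_{\mathcal K}$ with $I\subset J,K$ (where $U_{IL}:=\emptyset$ if $L\notin\mathcal I_{\mathcal K}$), and $\phi_{IJ}(U_{IK})=U_{JK}\cap\mathfrak s_J^{-1}(\mathbb E_{IJ})$ for all $I\subset J\subset K$ in $\mathcal I_{\mathcal K}$ (equalities of indices allowed). Virtual neighbourhood: for a topological Kuranishi atlas, $|\mathcal K|$ is the quotient of $\bigsqcup_{I\in\mathcal I_{\mathcal K}}U_I=\{(I,x):x\in U_I\}$ by the equivalence relation generated by $(I,x)\sim(J,\phi_{IJ}(x))$ for $I\subset J$, $x\in U_{IJ}$, with the quotient topology and projection $\pi_{\mathcal K}$; $\iota_{\mathcal K}(X):=\pi_{\mathcal K}\big(\bigsqcup_I\{I\}\times\mathfrak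 s_I^{-1}(0_I)\big)\subset|\mathcal K|$. Reductions: a reduction of a tame topological Kuranishi atlas $\mathcal K$ is a tuple $\mathcal V=\bigsqcup_{I\in\mathcal I_{\mathcal K}}V_I$ of (possibly empty) open subsets $V_I\subset U_I$ such that (i) $V_I\sqsubset U_I$ for all $I$, and $V_I\neq\emptyset$ implies $V_I\cap\mathfrak s_I^{-1}(0_I)\neq\emptyset$; (ii) if $\pi_{\mathcal K}(\overline{V_I})\cap\pi_{\mathcal K}(\overline{V_J})\neq\emptyset$ (closures in $U_I$, $U_J$) then $I\subset J$ or $J\subset I$; (iii) $\iota_{\mathcal K}(X)\subset\pi_{\mathcal K}(\mathcal V)=\bigcup_I\pi_{\mathcal K}(V_I)$. *)

From Stdlib Require Import Reals List.
From mathcomp Require Import all_boot.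

Set Implicit Arguments.
Unset Strict Implicit.
Unset Printing Implicit Defensive.

Record topology (T : Type) := Topology {
  opn : (T -> Prop) -> Prop;
  opn_setT : opn (fun _ => True);
  opn_I : forall A B, opn A -> opn B -> opn (fun x => A x /\ B x);
  opn_U : forall F : (T -> Prop) -> Prop,
      (forall A, F A -> opn A) -> opn (fun x => exists A, F A /\ A x)
}.

Record topSpace := TopSpace { carrier :> Type; top : topology carrier }.

Definition isOpen (T : topSpace) (A : T -> Prop) : Prop := opn (top T) A.
Definition isClosed (T : topSpace) (A : T -> Prop) : Prop :=
  isOpen (fun x => ~ A x).

Definition closure (T : topSpace) (A : T -> Prop) : T -> Prop :=
  fun x => forall O, isOpen O -> O x -> exists y, O y /\ A y.

Definition rel_open (T : topSpace) (S A : T -> Prop) : Prop :=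
  (forall x, A x -> S x) /\
  exists O, isOpen O /\ forall x, S x -> (A x <-> O x).

Definition compact (T : topSpace) (K : T -> Prop) : Prop :=
  forall C : (T -> Prop) -> Prop,
    (forall O, C O -> isOpen O) ->
    (forall x, K x -> exists O, C O /\ O x) ->
    exists l : list (T -> Prop),
      (forall O, In O l -> C O) /\ (forall x, K x -> exists O, In O l /\ O x).

Definition compact_space (T : topSpace) : Prop := compact (fun _ : T => True).

Definition rel_compact (T : topSpace) (V : T -> Prop) : Prop :=
  compact (closure V).

Definition is_metric (T : Type) (d : T -> T -> R) : Prop :=
  (forall x y, Rle 0 (d x y)) /\
  (forall x y, d x y = R0 <-> x = y) /\
  (forall x y, d x y = d y x) /\
  (forall x y z, Rle (d x z) (Rplus (d x y) (d y z))).

Definition metric_open (T : Type) (d : T -> T -> R) (O : T -> Prop) : Prop :=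
  forall x, O x -> exists eps, Rlt 0 eps /\ forall y, Rlt (d x y) eps -> O y.

Definition metrizable (T : topSpace) : Prop :=
  exists d : T -> T -> R, is_metric d /\
    forall O, isOpen O <-> metric_open d O.

Definition countable_set (T : Type) (D : T -> Prop) : Prop :=
  exists g : T -> nat, forall x y, D x -> D y -> g x = g y -> x = y.

Definition separable (T : topSpace) : Prop :=
  exists D : T -> Prop, countable_set D /\
    forall O, isOpen O -> (exists x, O x) -> exists y, O y /\ D y.

Definition locally_compact (T : topSpace) : Prop :=
  forall x : T, exists (O K : T -> Prop),
    isOpen O /\ O x /\ (forall y, O y -> K y) /\ compact K.

Definition slcm (T : topSpace) : Prop :=
  separable T /\ locally_compact T /\ metrizable T.

Definition continuous (S T : topSpace) (f : S -> T) : Prop :=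
  forall O, isOpen O -> isOpen (fun x => O (f x)).

Definition continuous_on (S T : topSpace) (A : S -> Prop) (f : S -> T) : Prop :=
  forall O, isOpen O ->
    exists O', isOpen O' /\ forall x, A x -> (O (f x) <-> O' x).

Definition embedding_on (S T : topSpace) (A : S -> Prop) (f : S -> T) : Prop :=
  continuous_on A f /\
  (forall x y, A x -> A y -> f x = f y -> x = y) /\
  (forall O, isOpen O -> exists O', isOpen O' /\
     forall y, (exists x, A x /\ f x = y) ->
       ((exists x, A x /\ O x /\ f x = y) <-> O' y)).

Definition homeo_onto (S T : topSpace) (A : S -> Prop) (B : T -> Prop)
    (f : S -> T) : Prop :=
  embedding_on A f /\ (forall y, B y <-> exists x, A x /\ f x = y).

Record chart (X : topSpace) := Chart {
  cU : topSpace;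
  cE : topSpace;
  cpr : cE -> cU;
  czero : cU -> cE;
  cs : cU -> cE;
  cpsi : cU -> X;
  cF : X -> Prop
}.

Arguments cpr {X} c _.
Arguments czero {X} c _.
Arguments cs {X} c _.
Arguments cpsi {X} c _.
Arguments cF {X} c _.

Definition zset (X : topSpace) (K : chart X) : cU K -> Prop :=
  fun x => cs K x = czero K x.

Arguments zset {X} K _.

Definition is_chart (X : topSpace) (K : chart X) : Prop :=
  isOpen (cF K) /\
  slcm (cU K) /\ slcm (cE K) /\
  continuous (cpr K) /\ continuous (czero K) /\
  (forall x, cpr K (czero K x) = x) /\
  continuous (cs K) /\ (forall x, cpr K (cs K x) = x) /\
  homeo_onto (zset K) (cF K) (cpsi K).

(* Charts are indexed by all subsets of {1..N} (as {set 'I_N}); only the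
   charts with index in I_K matter.  Coordinate-change data
   (U_IJ, Phi_IJ, phi_IJ) and filtration data E_IJ are given for all
   pairs and only constrained where the paper defines them. *)
Record atlas_data (X : topSpace) (N : nat) := AtlasData {
  ch : {set 'I_N} -> chart X;
  aU : forall I J : {set 'I_N}, cU (ch I) -> Prop;
  aPhi : forall I J : {set 'I_N}, cE (ch I) -> cE (ch J);
  aphi : forall I J : {set 'I_N}, cU (ch I) -> cU (ch J);
  aE : forall I J : {set 'I_N}, cE (ch J) -> Prop
}.

Arguments ch {X N} a _.
Arguments aU {X N} a I J _.
Arguments aPhi {X N} a I J _.
Arguments aphi {X N} a I J _.
Arguments aE {X N} a I J _.

Section AtlasDefs.
Local Unset Implicit Arguments.
Variables (X : topSpace) (N : nat) (K : atlas_data X N).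

Local Notation U I := (cU (ch K I)).
Local Notation E I := (cE (ch K I)).
Local Notation pr I := (cpr (ch K I)).
Local Notation z0 I := (czero (ch K I)).
Local Notation s I := (cs (ch K I)).
Local Notation psi I := (cpsi (ch K I)).
Local Notation Z I := (zset (ch K I)).

Definition FI (I : {set 'I_N}) : X -> Prop :=
  fun x => forall i, i \in I -> cF (ch K [set i]) x.

Definition inIK (I : {set 'I_N}) : Prop := I != set0 /\ exists x, FI I x.

Definition covering_family : Prop :=
  (forall i : 'I_N, is_chart (ch K [set i])) /\
  (forall x : X, exists i : 'I_N, cF (ch K [set i]) x).

Definition transition_charts : Prop :=
  forall J : {set 'I_N}, inIK J -> is_chart (ch K J) /\ (forall x, cF (ch K J) x <-> FI J x).

Definition diag_conventions : Prop :=
  forall I : {set 'I_N}, inIK I -> (forall x, aU K I I x) /\ (forall x, aphi K I I x = x).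

Definition coord_change (I J : {set 'I_N}) : Prop :=
  isOpen (aU K I J) /\
  (forall x, (aU K I J x /\ Z I x) <->
             (Z I x /\ cF (ch K I) (psi I x) /\ cF (ch K J) (psi I x))) /\
  embedding_on (fun e => aU K I J (pr I e)) (aPhi K I J) /\
  embedding_on (aU K I J) (aphi K I J) /\
  (forall e, aU K I J (pr I e) -> pr J (aPhi K I J e) = aphi K I J (pr I e)) /\
  (forall x, aU K I J x -> z0 J (aphi K I J x) = aPhi K I J (z0 I x)) /\
  (forall x, aU K I J x -> s J (aphi K I J x) = aPhi K I J (s I x)) /\
  (forall x, aU K I J x -> Z I x ->
             Z J (aphi K I J x) /\ psi J (aphi K I J x) = psi I x).

Definition coord_changes : Prop :=
  forall I J : {set 'I_N}, inIK I -> inIK J -> I \proper J -> coord_change I J.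

Definition UIJK (I J L : {set 'I_N}) : U I -> Prop :=
  fun x => aU K I J x /\ aU K J L (aphi K I J x).


Definition weak_cocycle : Prop :=
  forall I J L : {set 'I_N}, inIK I -> inIK J -> inIK L -> I \proper J -> J \proper L ->
    forall e, UIJK I J L (pr I e) -> aU K I L (pr I e) ->
      aPhi K J L (aPhi K I J e) = aPhi K I L e.

Definition cocycle : Prop :=
  weak_cocycle /\
  forall I J L : {set 'I_N}, inIK I -> inIK J -> inIK L -> I \proper J -> J \proper L ->
    forall x, UIJK I J L x -> aU K I L x.

Definition top_atlas : Prop :=
  covering_family /\ transition_charts /\ diag_conventions /\
  coord_changes /\ cocycle.

Definition filtered : Prop :=
  (forall I J : {set 'I_N}, inIK J -> I \subset J -> isClosed (aE K I J)) /\
  (forall J : {set 'I_N}, inIK J -> (forall e, aE K J J e) /\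
     (forall e, aE K set0 J e <-> exists x, z0 J x = e)) /\
  (forall I J L : {set 'I_N}, inIK J -> inIK L -> I \subset J -> J \proper L ->
     forall f, (exists e, aU K J L (pr J e) /\ aE K I J e /\ aPhi K J L e = f)
               <-> (aE K I L f /\ exists x, aU K J L x /\ aphi K J L x = pr L f)) /\
  (forall I H J : {set 'I_N}, inIK J -> I \subset J -> H \subset J ->
     forall e, (aE K I J e /\ aE K H J e) <-> aE K (I :&: H) J e) /\
  (forall I J : {set 'I_N}, inIK I -> inIK J -> I \proper J ->
     rel_open (fun y => aE K I J (s J y))
              (fun y => exists x, aU K I J x /\ aphi K I J x = y)).

Definition tame : Prop :=
  (forall I J L : {set 'I_N}, inIK I -> inIK J -> inIK L -> I \subset J -> I \subset L ->
     forall x, (aU K I J x /\ aU K I L x) <->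
               (inIK (J :|: L) /\ aU K I (J :|: L) x)) /\
  (forall I J L : {set 'I_N}, inIK I -> inIK J -> inIK L -> I \subset J -> J \subset L ->
     forall y, (exists x, aU K I L x /\ aphi K I J x = y) <->
               (aU K J L y /\ aE K I J (s J y))).

Definition tame_top_atlas : Prop := top_atlas /\ filtered /\ tame.

(* The virtual neighbourhood |K| (only the equivalence relation is     *)

Definition pt := {I : {set 'I_N} & U I}.

Definition step (p q : pt) : Prop :=
  inIK (projT1 p) /\ inIK (projT1 q) /\ projT1 p \subset projT1 q /\
  aU K (projT1 p) (projT1 q) (projT2 p) /\
  aphi K (projT1 p) (projT1 q) (projT2 p) = projT2 q.

Definition equiv_pt : pt -> pt -> Prop :=
  Relation_Operators.clos_refl_sym_trans pt step.

Definition is_reduction (V : forall I : {set 'I_N}, U I -> Prop) : Prop :=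
  (forall I : {set 'I_N}, inIK I ->
     isOpen (V I) /\ rel_compact (V I) /\
     ((exists x, V I x) -> exists x, V I x /\ Z I x)) /\
  (forall I J : {set 'I_N}, inIK I -> inIK J ->
     (exists x y, closure (V I) x /\ closure (V J) y /\
                  equiv_pt (existT _ I x) (existT _ J y)) ->
     I \subset J \/ J \subset I) /\
  (forall (I : {set 'I_N}) x, inIK I -> Z I x ->
     exists J y, inIK J /\ V J y /\ equiv_pt (existT _ I x) (existT _ J y)).

End AtlasDefs.
Arguments FI {X N} K : rename.
Arguments inIK {X N} K : rename.
Arguments covering_family {X N} K : rename.
Arguments transition_charts {X N} K : rename.
Arguments diag_conventions {X N} K : rename.
Arguments coord_change {X N} K : rename.
Arguments coord_changes {X N} K : rename.
Arguments UIJK {X N} K : rename.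
Arguments weak_cocycle {X N} K : rename.
Arguments cocycle {X N} K : rename.
Arguments top_atlas {X N} K : rename.
Arguments filtered {X N} K : rename.
Arguments tame {X N} K : rename.
Arguments tame_top_atlas {X N} K : rename.
Arguments pt {X N} K : rename.
Arguments step {X N} K : rename.
Arguments equiv_pt {X N} K : rename.
Arguments is_reduction {X N} K : rename.

(* Shrink the footprints first: using the distances to the complements of the
   basic footprints F_i, choose sets Z_I covering X with cl Z_I inside F_I and
   cl Z_I, cl Z_J disjoint unless I and J are comparable.  The compact sets
   psi_I^-1(cl Z_I) in U_I cover iota(X).  By tameness, two points of U_I and
   U_J that are identified in |K| have a common image in U_(I u J) lying in the
   filtration piece E_(I n J); so they come from one point of U_(I n J), or,
   when I n J is empty, they lie over the same point of X.  Hence for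
   incomparable I, J a point over cl Z_I and a point over cl Z_J have
   neighbourhoods whose closures are never identified, and a tube-lemma
   argument extends this to the compact sets themselves.  V_I is a precompact
   neighbourhood of psi_I^-1(cl Z_I) contained in all these neighbourhoods. *)

From Pilot Require Import Defs.
From Stdlib Require Import Reals List.
From mathcomp Require Import all_boot.
From Stdlib Require Import Classical Lra FunctionalExtensionality PropExtensionality.
From Stdlib Require Import IndefiniteDescription ChoiceFacts.
From mathcomp Require Import zify.

Set Implicit Arguments.
Unset Strict Implicit.

Local Notation closure := Defs.closure.
Local Notation compact := Defs.compact.

(** * Point-set topology *)

Lemma list_filter_prop (A : Type) (P : A -> Prop) (l : list A) :
  exists l', forall x, In x l' <-> In x l /\ P x.
Proof.
elim: l => [|a l [l' hl']]; first by exists nil => x; split=> [[] | [[]]].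
case: (classic (P a)) => Pa; [exists (a :: l') | exists l'] => x /=.
  split=> [[<- | /hl' [xl Px]] | [[<- | xl] Px]]; first by split; [left |].
  - by split; [right |].
  - by left.
  by right; apply/hl'.
split=> [/hl' [xl Px] | [[ax | xl] Px]]; first by split; [right |].
  by rewrite -ax in Px.
exact/hl'.
Qed.

Section Topology.
Variable T : topSpace.
Implicit Types A B O : T -> Prop.

Lemma open_ext A B : (forall x, A x <-> B x) -> isOpen A -> isOpen B.
Proof.
move=> AB; suff -> : B = A by [].
apply: functional_extensionality => x; apply: propositional_extensionality.
exact: iff_sym.
Qed.

Lemma open_setT : isOpen (fun _ : T => True).
Proof. exact: opn_setT. Qed.

Lemma open_list_union (l : list (T -> Prop)) : (forall O, In O l -> isOpen O) ->
  isOpen (fun x => exists O, In O l /\ O x).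
Proof. exact: (@opn_U _ (top T) (fun O => In O l)). Qed.

Lemma open_set0 : isOpen (fun _ : T => False).
Proof.
apply: (open_ext (A := fun x => exists O, In O nil /\ O x)); last by apply: open_list_union.
by move=> x; split=> [[O [[]]] | []].
Qed.

Lemma open_constI (c : Prop) A : isOpen A -> isOpen (fun x => c /\ A x).
Proof.
move=> oA; case: (classic c) => hc.
  by apply: open_ext oA => x; split=> [|[]].
by apply: open_ext open_set0 => x; split=> [[]|[]].
Qed.

Lemma open_fin_forall (I : finType) (P : I -> T -> Prop) :
  (forall i, isOpen (P i)) -> isOpen (fun x => forall i, P i x).
Proof.
move=> oP; suff o_s (s : seq I) : isOpen (fun x => forall i, i \in s -> P i x).
  apply: open_ext (o_s (enum I)) => x.
  by split=> hx i => [|_]; [apply: hx; rewrite mem_enum | apply: hx].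
elim: s => [|i s IH].
  by apply: open_ext open_setT => x; split=> // _ i; rewrite in_nil.
apply: open_ext (opn_I (oP i) IH) => x; split.
  by move=> [Pi Ps] j; rewrite in_cons => /orP[/eqP -> // | /Ps].
by move=> Ps; split=> [|j js]; apply: Ps; rewrite in_cons ?eqxx ?js ?orbT.
Qed.

Lemma subset_closure A x : A x -> closure A x.
Proof. by move=> Ax O _ Ox; exists x. Qed.

Lemma closure_mono A B : (forall x, A x -> B x) -> forall x, closure A x -> closure B x.
Proof. by move=> AB x clA O oO Ox; case: (clA O oO Ox) => y [Oy /AB]; exists y. Qed.

Lemma notin_closure A O x : isOpen O -> O x -> (forall y, O y -> ~ A y) -> ~ closure A x.
Proof. by move=> oO Ox OA clA; case: (clA O oO Ox) => y [Oy]; apply: OA. Qed.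

Lemma closed_closure A : isClosed (closure A).
Proof.
pose C O := isOpen O /\ forall y, O y -> ~ A y.
apply: (open_ext (A := fun x => exists O, C O /\ O x)); last first.
  by apply: (@opn_U _ (top T) C) => O [].
move=> x; split=> [[O [[oO OA] Ox]] | nclA]; first exact: notin_closure oO Ox OA.
apply: NNPP => nC; apply: nclA => O oO Ox; apply: NNPP => nOA; apply: nC.
by exists O; split=> //; split=> // y Oy Ay; apply: nOA; exists y.
Qed.

Lemma closure_setU A B x : closure (fun y => A y \/ B y) x -> closure A x \/ closure B x.
Proof.
move=> clAB; apply: NNPP => /not_or_and[nclA nclB].
case: (clAB _ (opn_I (closed_closure A) (closed_closure B)) (conj nclA nclB)).
by move=> y [[nA nB] [Ay|By]]; [apply: nA | apply: nB]; apply: subset_closure.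
Qed.

Lemma closure_set0 x : ~ closure (fun _ : T => False) x.
Proof. by move=> cl; case: (cl _ open_setT I) => y []. Qed.

Lemma closure_list_union (l : list (T -> Prop)) x :
  closure (fun y => exists O, In O l /\ O y) x -> exists O, In O l /\ closure O x.
Proof.
elim: l => [|O l IH] cl.
  by case: (closure_set0 (closure_mono (fun y => fun '(ex_intro _ (conj i _)) => i) cl)).
have : closure (fun y => O y \/ exists O', In O' l /\ O' y) x.
  by apply: closure_mono cl => y [O' [[<- | i] O'y]]; [left | right; exists O'].
case/closure_setU => [clO | /IH [O' [i clO']]]; first by exists O; split=> //; left.
by exists O'; split=> //; right.
Qed.

Lemma compact_setU A B : compact A -> compact B -> compact (fun x => A x \/ B x).
Proof.
move=> cA cB C oC cov.
case: (cA C oC (fun x Ax => cov x (or_introl Ax))) => lA [CA covA].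
case: (cB C oC (fun x Bx => cov x (or_intror Bx))) => lB [CB covB].
exists (lA ++ lB); split=> [O i | x [Ax | Bx]]; first by case: (in_app_or _ _ _ i); auto.
  by case: (covA x Ax) => O [i Ox]; exists O; split=> //; apply: in_or_app; left.
by case: (covB x Bx) => O [i Ox]; exists O; split=> //; apply: in_or_app; right.
Qed.

Lemma compact_list_union (l : list (T -> Prop)) : (forall A, In A l -> compact A) ->
  compact (fun x => exists A, In A l /\ A x).
Proof.
elim: l => [_ | A l IH cl] C oC cov.
  by exists nil; split=> // x [? [[]]].
have cAl := compact_setU (cl A (or_introl erefl)) (IH (fun A' i => cl A' (or_intror i))).
case: (cAl C oC) => [x [Ax | [A' [i A'x]]] | l' hl'].
- by apply: cov; exists A; split=> //; left.
- by apply: cov; exists A'; split=> //; right.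
exists l'; split=> [|x [A' [[<- | i] A'x]]]; first exact: hl'.1.
  by apply: hl'.2; left.
by apply: hl'.2; right; exists A'.
Qed.

Lemma compact_closed_subset A B : compact A -> (forall x, B x -> A x) -> isClosed B ->
  compact B.
Proof.
move=> cA BA cB C oC cov.
pose C' O := C O \/ O = (fun x => ~ B x).
case: (cA C') => [O [/oC | -> //] // | x Ax | l [lC' covl]].
  case: (classic (B x)) => [/cov [O [CO Ox]] | nBx]; first by exists O; split=> //; left.
  by exists (fun x => ~ B x); split=> //; right.
case: (list_filter_prop C l) => lC hlC; exists lC; split=> [O /hlC [] // | x Bx].
case: (covl x (BA x Bx)) => O [i Ox]; exists O; split=> //; apply/hlC; split=> //.
by case: (lC' O i) => [// | eO]; rewrite eO in Ox.
Qed.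

End Topology.

Section Metric.
Local Open Scope R_scope.

Lemma list_uniform_lower_bound (A : Type) (Q : R -> A -> Prop) (l : list A) :
  (forall r r' a, r' <= r -> Q r a -> Q r' a) ->
  (forall a, In a l -> exists r, 0 < r /\ Q r a) ->
  exists e, 0 < e /\ forall a, In a l -> Q e a.
Proof.
move=> Qmono; elim: l => [|a l IH] hl; first by exists 1; split=> [|a []]; lra.
case: (IH (fun b i => hl b (or_intror i))) => e [e0 he].
case: (hl a (or_introl erefl)) => r [r0 Qa].
exists (Rmin e r); split=> [|b [<- | i]]; first exact: Rmin_glb_lt.
  by apply: Qmono Qa; apply: Rmin_r.
by apply: Qmono (he b i); apply: Rmin_l.
Qed.

Variables (A : Type) (d : A -> A -> R).
Hypothesis md : is_metric d.

Lemma metric_dist_refl x : d x x = 0.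
Proof. by case: md => _ [dE _]; apply/dE. Qed.

Lemma metric_dist_gt0 x y : x <> y -> 0 < d x y.
Proof.
case: md => d0 [dE _] nxy; case: (Rle_lt_or_eq_dec _ _ (d0 x y)) => // e.
by case: nxy; apply/dE.
Qed.

Lemma metric_open_ball x r : metric_open d (fun y => d x y < r).
Proof.
case: md => _ [_ [_ dT]] y hy; exists (r - d x y); split=> [|z hz]; first lra.
by have := dT x y z; lra.
Qed.

Lemma metric_open_far x r : metric_open d (fun y => r < d x y).
Proof.
case: md => _ [_ [dS dT]] y hy; exists (d x y - r); split=> [|z hz]; first lra.
by have := dT x z y; rewrite (dS z y); lra.
Qed.

End Metric.

Section MetrizableSpace.
Local Open Scope R_scope.
Variable T : topSpace.
Hypothesis hT : metrizable T.
Implicit Types A O : T -> Prop.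

Lemma regular_nbhd O x : isOpen O -> O x ->
  exists V, isOpen V /\ V x /\ forall y, closure V y -> O y.
Proof.
case: hT => d [md hd] oO Ox; case: ((proj1 (hd O) oO) x Ox) => e [e0 ballO].
exists (fun y => d x y < e / 2); split; first exact/hd/(metric_open_ball md).
split=> [|y clV]; first by rewrite (metric_dist_refl md); lra.
apply: ballO; apply: NNPP => far.
have oF : isOpen (fun y => e / 2 < d x y) by exact/hd/(metric_open_far md).
have Fy : e / 2 < d x y by apply: Rnot_le_lt => h; apply: far; lra.
by apply: (notin_closure oF Fy) clV => z; lra.
Qed.

Lemma hausdorff (x y : T) : x <> y -> exists O O', isOpen O /\ isOpen O' /\ O x /\ O' y /\
  forall z, O z -> O' z -> False.
Proof.
case: hT => d [md hd] nxy; have dxy := metric_dist_gt0 md nxy.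
exists (fun z => d x z < d x y / 2), (fun z => d y z < d x y / 2).
do 2 (split; first exact/hd/(metric_open_ball md)).
rewrite !(metric_dist_refl md); do 2 (split; first lra).
by case: md => _ [_ [dS dT]] z; have := dT x z y; rewrite (dS z y); lra.
Qed.

Lemma compact_closed A : compact A -> isClosed A.
Proof.
case: hT => d [md hd] cA; apply/hd => x nAx.
pose C O := exists r, 0 < r /\ O = (fun y => r < d x y).
case: (cA C) => [O [r [_ ->]] | y Ay | l [lC covl]]; first exact/hd/(metric_open_far md).
  have dxy : 0 < d x y by apply: (metric_dist_gt0 md) => exy; rewrite exy in nAx.
  exists (fun z => d x y / 2 < d x z); split; [exists (d x y / 2); split=> // | ]; lra.
case: (list_uniform_lower_bound (Q := fun r O => forall z, O z -> r < d x z) (l := l)).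
- by move=> r r' O le hO z /hO; lra.
- by move=> O /lC [r [r0 ->]]; exists r.
move=> e [e0 he]; exists e; split=> // z dz Az.
by case: (covl z Az) => O [i Oz]; have := he O i z Oz; lra.
Qed.

Lemma closure_subset_compact K A : compact K -> (forall x, A x -> K x) ->
  forall x, closure A x -> K x.
Proof.
move=> cK AK x clA; apply: NNPP => nKx.
by apply: notin_closure (compact_closed cK) nKx _ clA => y nKy /AK.
Qed.

Lemma precompact_nbhd A : locally_compact T -> compact A ->
  exists P, isOpen P /\ (forall x, A x -> P x) /\ compact (closure P).
Proof.
move=> lc cA.
pose C O := isOpen O /\ exists K, compact K /\ forall y, O y -> K y.
case: (cA C) => [O [] // | x _ | l [lC covl]].
  by case: (lc x) => O [K [oO [Ox [OK cK]]]]; exists O; split=> //; split=> //; exists K.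
have [lK [lKc OlK]] : exists lK, (forall K, In K lK -> compact K) /\
    forall x, (exists O, In O l /\ O x) -> exists K, In K lK /\ K x.
  elim: l lC {covl} => [|O l IH] lC; first by exists nil; split=> // x [? [[]]].
  case: (IH (fun O' i => lC O' (or_intror i))) => lK [lKc OlK].
  case: (lC O (or_introl erefl)) => _ [K [cK OK]].
  exists (K :: lK); split=> [K' [<- | /lKc] // | x [O' [[<- | i] O'x]]].
    by exists K; split; [left | apply: OK].
  by case: (OlK x) => [|K' [i' K'x]]; [exists O' | exists K'; split=> //; right].
exists (fun x => exists O, In O l /\ O x); split; first by apply: open_list_union => O /lC [].
split=> //; apply: (compact_closed_subset (compact_list_union lKc)) => [x|]; last first.
  exact: closed_closure.
exact: closure_subset_compact (compact_list_union lKc) OlK x.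
Qed.

End MetrizableSpace.

Section ClosureSeparation.
Variables (S T : topSpace) (bad : S -> T -> Prop).

Definition closure_separated (A : S -> Prop) (B : T -> Prop) : Prop :=
  exists W W', isOpen W /\ isOpen W' /\ (forall x, A x -> W x) /\ (forall y, B y -> W' y) /\
    forall x y, closure W x -> closure W' y -> ~ bad x y.

Lemma closure_separated_compact_r A B : compact B ->
  (forall b, B b -> closure_separated A (eq b)) -> closure_separated A B.
Proof.
move=> cB sepAb.
pose C W' := isOpen W' /\ exists W, isOpen W /\ (forall x, A x -> W x) /\
  forall x y, closure W x -> closure W' y -> ~ bad x y.
case: (cB C) => [W' [] // | b Bb | l [lC covl]].
  case: (sepAb b Bb) => W [W' [oW [oW' [AW [bW' sepW]]]]].
  by exists W'; split; [split=> //; exists W | exact: bW'].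
have [W [oW [AW sepW]]] : exists W, isOpen W /\ (forall x, A x -> W x) /\
    forall W', In W' l -> forall x y, closure W x -> closure W' y -> ~ bad x y.
  elim: l lC {covl} => [|W' l IH] lC.
    by exists (fun _ => True); split; [exact: open_setT | split=> // ? []].
  case: (IH (fun O i => lC O (or_intror i))) => W [oW [AW sepW]].
  case: (lC W' (or_introl erefl)) => _ [W1 [oW1 [AW1 sepW1]]].
  exists (fun x => W x /\ W1 x); split; first exact: opn_I.
  split=> [x Ax | W'' [<- | i] x y clx cly]; first by split; auto.
    by apply: sepW1 cly; apply: closure_mono clx => ? [].
  by apply: (sepW _ i x y) cly; apply: closure_mono clx => ? [].
exists W, (fun y => exists W', In W' l /\ W' y); split=> //.
split; first by apply: open_list_union => O /lC [].
split=> //; split=> [y /covl [W' [i W'y]] | x y clx /closure_list_union [W' [i clW']]].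
  by exists W'.
exact: (sepW _ i x y clx clW').
Qed.

Lemma closure_separated_points a b Na Nb : isOpen Na -> isOpen Nb -> Na a -> Nb b ->
  (forall x y, closure Na x -> closure Nb y -> ~ bad x y) ->
  closure_separated (eq a) (eq b).
Proof.
move=> oNa oNb Naa Nbb sep; exists Na, Nb; do 2 (split=> //).
by split=> [x <- // |]; split=> // y <-.
Qed.

End ClosureSeparation.

Lemma closure_separated_sym (S T : topSpace) (bad : S -> T -> Prop) A B :
  closure_separated bad A B -> closure_separated (fun y x => bad x y) B A.
Proof.
case=> W [W' [oW [oW' [AW [BW' sep]]]]]; exists W', W.
by do 4 (split=> //); move=> y x clW' clW; apply: sep.
Qed.

Lemma closure_separated_weaken (S T : topSpace) (bad bad' : S -> T -> Prop) A B :
  (forall x y, bad' x y -> bad x y) -> closure_separated bad A B -> closure_separated bad' A B.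
Proof.
move=> bad'bad [W [W' [oW [oW' [AW [BW' sep]]]]]]; exists W, W'; do 4 (split=> //).
by move=> x y clx cly /bad'bad; apply: sep.
Qed.

Lemma closure_separated_compact (S T : topSpace) (bad : S -> T -> Prop) A B :
  compact A -> compact B ->
  (forall a b, A a -> B b -> closure_separated bad (eq a) (eq b)) ->
  closure_separated bad A B.
Proof.
move=> cA cB sep.
have sepB a : A a -> closure_separated (fun y x => bad x y) B (eq a).
  move=> Aa; apply: closure_separated_sym.
  by apply: closure_separated_compact_r cB _ => b Bb; apply: sep.
exact: closure_separated_sym (closure_separated_compact_r cA sepB).
Qed.

Lemma compact_homeo_preimage (S T : topSpace) (A : S -> Prop) (B K : T -> Prop)
    (f : S -> T) :
  homeo_onto A B f -> compact K -> (forall y, K y -> B y) ->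
  compact (fun x => A x /\ K (f x)).
Proof.
move=> [[_ [f_inj f_open]] f_onto] cK KB C oC cov.
pose C' O' := isOpen O' /\ exists O, C O /\ forall y, (exists x, A x /\ f x = y) ->
  ((exists x, A x /\ O x /\ f x = y) <-> O' y).
case: (cK C') => [O' [] // | y Ky | l' [l'C' covl']].
  case: (proj1 (f_onto y) (KB y Ky)) => x [Ax efx]; subst y.
  case: (cov x (conj Ax Ky)) => O [CO Ox]; case: (f_open O (oC O CO)) => O' [oO' hO'].
  exists O'; split; first by split=> //; exists O.
  by apply/hO'; exists x; [| split].
have [l [lC hl]] : exists l, (forall O, In O l -> C O) /\ forall O', In O' l' ->
    exists O, In O l /\ forall y, (exists x, A x /\ f x = y) ->
      ((exists x, A x /\ O x /\ f x = y) <-> O' y).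
  elim: l' l'C' {covl'} => [|O' l' IH] l'C'; first by exists nil; split=> // ? [].
  case: (IH (fun O i => l'C' O (or_intror i))) => l [lC hl].
  case: (l'C' O' (or_introl erefl)) => _ [O [CO hO]].
  exists (O :: l); split=> [O2 [<- | /lC] // | O2 [<- | /hl [O3 [i hO3]]]].
    by exists O; split=> //; left.
  by exists O3; split=> //; right.
exists l; split=> // x [Ax Kfx].
case: (covl' (f x) Kfx) => O' [i O'fx]; case: (hl O' i) => O [iO hO].
case: (proj2 (hO (f x) (ex_intro _ x (conj Ax erefl))) O'fx) => x' [Ax' [Ox' efx]].
by exists O; split=> //; rewrite -(f_inj x' x Ax' Ax efx).
Qed.

(** * Shrinking the footprints *)

Section InnerRadius.
Local Open Scope R_scope.
Variables (X : topSpace) (d : X -> X -> R).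
Hypotheses (md : is_metric d) (hd : forall O, isOpen O <-> metric_open d O).
Variables (N : nat) (F : 'I_N -> X -> Prop).
Hypothesis oF : forall i, isOpen (F i).

Definition inner_radii i x (r : R) : Prop := 0 <= r <= 1 /\ forall y, d x y < r -> F i y.

Lemma inner_radii_bound i x : bound (inner_radii i x).
Proof. by exists 1 => r [[_ ?] _]. Qed.

Lemma inner_radii0 i x : inner_radii i x 0.
Proof. by split=> [|y]; [lra | case: md => d0 _; have := d0 x y; lra]. Qed.

(* The distance from [x] to the complement of [F i], truncated at 1. *)
Definition inradius i x : R :=
  proj1_sig (completeness _ (inner_radii_bound i x) (ex_intro _ 0 (inner_radii0 i x))).

Lemma inradius_ub i x r : inner_radii i x r -> r <= inradius i x.
Proof. by rewrite /inradius; case: completeness => m [ub _] /=; apply: ub. Qed.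

Lemma inradius_lub i x M : (forall r, inner_radii i x r -> r <= M) -> inradius i x <= M.
Proof. by rewrite /inradius; case: completeness => m [_ lub] /=; apply: lub. Qed.

Lemma inradius_ge0 i x : 0 <= inradius i x.
Proof. exact: inradius_ub (inner_radii0 i x). Qed.

Lemma inradius_gt0 i x : F i x -> 0 < inradius i x.
Proof.
move=> Fx; case: ((proj1 (hd _) (oF i)) x Fx) => e [e0 ballF].
have r_in : inner_radii i x (Rmin e 1).
  split=> [|y dy]; first by split; [apply: Rmin_glb; lra | apply: Rmin_r].
  by apply: ballF; have := Rmin_l e 1; lra.
have := inradius_ub r_in; have : 0 < Rmin e 1 by apply: Rmin_glb_lt; lra.
lra.
Qed.

Lemma mem_of_inradius_gt0 i x : 0 < inradius i x -> F i x.
Proof.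
move=> r_gt0; apply: NNPP => nFx.
suff : inradius i x <= 0 by lra.
apply: inradius_lub => r [_ ballF]; apply: Rnot_lt_le => r_gt0'; apply: nFx.
by apply: ballF; rewrite (metric_dist_refl md).
Qed.

Lemma inradius_lipschitz i x y : inradius i x <= inradius i y + d x y.
Proof.
have [d0 [_ [_ dT]]] := md.
apply: inradius_lub => r [[r0 r1] ballF].
case: (Rle_or_lt r (d x y)) => rd; first by have := inradius_ge0 i y; lra.
have r_in : inner_radii i y (r - d x y).
  split=> [|z dz]; first by have := d0 x y; lra.
  by apply: ballF; have := dT x y z; lra.
by have := inradius_ub r_in; lra.
Qed.

Lemma open_inradius_gt i c : isOpen (fun x => c < inradius i x).
Proof.
apply/hd => x cx; exists (inradius i x - c); split=> [|y dy]; first lra.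
by have := inradius_lipschitz i x y; lra.
Qed.

Lemma open_inradius_lt i c : isOpen (fun x => inradius i x < c).
Proof.
apply/hd => x cx; exists (c - inradius i x); split=> [|y dy]; first lra.
by have := inradius_lipschitz i y x; case: md => _ [_ [dS _]]; rewrite (dS y x); lra.
Qed.

Lemma closure_inradius_ge i c (A : X -> Prop) x :
  (forall y, A y -> c < inradius i y) -> closure A x -> c <= inradius i x.
Proof.
move=> Ac clA; apply: Rnot_lt_le => lt.
by apply: notin_closure (open_inradius_lt i c) lt _ clA => y ? /Ac; lra.
Qed.

Lemma closure_inradius_le i c (A : X -> Prop) x :
  (forall y, A y -> inradius i y < c) -> closure A x -> inradius i x <= c.
Proof.
move=> Ac clA; apply: Rnot_lt_le => lt.
by apply: notin_closure (open_inradius_gt i c) lt _ clA => y ? /Ac; lra.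
Qed.

Lemma uniform_inradius : compact_space X -> (forall x, exists i, F i x) ->
  exists delta, 0 < delta /\ forall x, exists i, delta < inradius i x.
Proof.
move=> cX covF.
pose C O := exists i r, 0 < r /\ O = (fun x => r < inradius i x).
case: (cX C) => [O [i [r [_ ->]]] | x _ | l [lC covl]]; first exact: open_inradius_gt.
  case: (covF x) => i /inradius_gt0 gt0.
  exists (fun y => inradius i x / 2 < inradius i y); split; last lra.
  by exists i, (inradius i x / 2); split=> //; lra.
case: (list_uniform_lower_bound
        (Q := fun r O => forall z, O z -> exists i, r < inradius i z) (l := l)).
- by move=> r r' O le hO z /hO [i ?]; exists i; lra.
- by move=> O /lC [i [r [r0 ->]]]; exists r; split=> // z ?; exists i.
move=> e [e0 he]; exists e; split=> // x.
by case: (covl x I) => O [i Ox]; apply: he i x Ox.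
Qed.

Section Strata.
Variable delta : R.
Hypotheses (delta_gt0 : 0 < delta) (delta_cover : forall x, exists i, delta < inradius i x).

Definition threshold (k : nat) : R := delta / INR k.+1.

Lemma threshold_lt k l : (k < l)%N -> threshold l < threshold k.
Proof.
move=> kl; rewrite /threshold /Rdiv; apply: Rmult_lt_compat_l => //.
apply: Rinv_lt_contravar; first by apply: Rmult_lt_0_compat; apply: lt_0_INR; lia.
by apply: lt_INR; apply/ltP.
Qed.

Lemma threshold_le k l : (k <= l)%N -> threshold l <= threshold k.
Proof. by rewrite leq_eqVlt => /orP[/eqP -> | /threshold_lt]; lra. Qed.

(* Points of [stratum I] are deep in [F i] exactly for [i \in I]. "Deep" is
   measured against the interleaved thresholds [threshold (2 #|I|)] and
   [threshold (2 #|I|).+1], so closures of strata with incomparable index sets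
   cannot meet. *)
Definition stratum (I : {set 'I_N}) (x : X) : Prop :=
  I != set0 /\ forall i, if i \in I then threshold (2 * #|I|) < inradius i x
                         else inradius i x < threshold (2 * #|I|).+1.

Lemma closure_stratum_neq0 I x : closure (stratum I) x -> I != set0.
Proof.
move=> cl; apply: NNPP => /negP; rewrite negbK => /eqP I0.
by apply: (@closure_set0 _ x); apply: closure_mono cl => y []; rewrite I0 eqxx.
Qed.

Lemma closure_stratum_in I x i : closure (stratum I) x -> i \in I ->
  threshold (2 * #|I|) <= inradius i x.
Proof. by move=> cl iI; apply: closure_inradius_ge cl => y [_ /(_ i)]; rewrite iI. Qed.

Lemma closure_stratum_out I x i : closure (stratum I) x -> i \notin I ->
  inradius i x <= threshold (2 * #|I|).+1.
Proof.
by move=> cl iI; apply: closure_inradius_le cl => y [_ /(_ i)]; rewrite (negbTE iI).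
Qed.

Lemma closure_stratum_mem I x i : closure (stratum I) x -> i \in I -> F i x.
Proof.
move=> cl iI; apply: mem_of_inradius_gt0.
have := closure_stratum_in cl iI; have : 0 < threshold (2 * #|I|).
  by apply: Rdiv_lt_0_compat => //; apply: lt_0_INR; lia.
lra.
Qed.

Lemma closure_strata_comparable I J x : closure (stratum I) x -> closure (stratum J) x ->
  I \subset J \/ J \subset I.
Proof.
move=> clI clJ; apply: NNPP => /not_or_and[/negP/subsetPn[i iI iJ] /negP/subsetPn[j jJ jI]].
have := closure_stratum_in clI iI; have := closure_stratum_out clJ iJ.
have := closure_stratum_in clJ jJ; have := closure_stratum_out clI jI.
case: (leqP #|I| #|J|) => IJ.
  have : (2 * #|I| < (2 * #|J|).+1)%N by lia.
  by move/threshold_lt; lra.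
have : (2 * #|J| < (2 * #|I|).+1)%N by lia.
by move/threshold_lt; lra.
Qed.

Lemma strata_cover x : exists I, stratum I x.
Proof.
pose S k := [set i | Rlt_dec (threshold (2 * k)) (inradius i x)].
have S_mono k l : (k <= l)%N -> S k \subset S l.
  move=> kl; apply/subsetP => i; rewrite !inE; case: Rlt_dec => // lt _.
  case: Rlt_dec => // nlt; exfalso; apply: nlt; have : (2 * k <= 2 * l)%N by lia.
  by move/threshold_le; lra.
have S1 : (1 <= #|S 1%N|)%N.
  case: (delta_cover x) => i lt; rewrite card_gt0; apply/set0Pn; exists i.
  rewrite inE; case: Rlt_dec => // nlt; exfalso; apply: nlt.
  rewrite /threshold (_ : INR (2 * 1).+1 = 3); first lra.
  by rewrite /=; lra.
have ub k : (k <= #|S k|)%N -> (k <= N)%N.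
  by move=> le; apply: leq_trans le _; apply: leq_trans (max_card _) _; rewrite card_ord.
have [m Sm maxm] := ex_maxnP (ex_intro (fun k => k <= #|S k|)%N 1%N S1) ub.
have cardS : #|S m| = m.
  apply/eqP; rewrite eqn_leq Sm andbT -ltnS.
  apply: leq_ltn_trans (subset_leq_card (S_mono _ _ (leqnSn m))) _.
  by rewrite ltnNge; apply/negP => /maxm; rewrite ltnn.
exists (S m); split; first by rewrite -card_gt0 cardS; apply: maxm S1.
move=> i; rewrite cardS; case: ifP => [| iS]; first by rewrite inE; case: Rlt_dec.
apply: Rnot_le_lt => ge.
have iS1 : i \in S m.+1.
  rewrite inE; case: Rlt_dec => // nlt; exfalso; apply: nlt.
  have : ((2 * m).+1 < 2 * m.+1)%N by lia.
  by move/threshold_lt; lra.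
have : i |: S m \subset S m.+1 by rewrite subUset sub1set iS1 S_mono.
by move/subset_leq_card; rewrite cardsU1 iS cardS => /maxm; rewrite ltnn.
Qed.

End Strata.
End InnerRadius.

Lemma footprint_strata (X : topSpace) (N : nat) (F : 'I_N -> X -> Prop) :
  metrizable X -> compact_space X ->
  (forall i, isOpen (F i)) -> (forall x, exists i, F i x) ->
  exists Z : {set 'I_N} -> X -> Prop,
    (forall I x, closure (Z I) x -> I != set0) /\
    (forall I x i, closure (Z I) x -> i \in I -> F i x) /\
    (forall I J x, closure (Z I) x -> closure (Z J) x -> I \subset J \/ J \subset I) /\
    (forall x, exists I, Z I x).
Proof.
case=> d [md hd] cX oF covF.
have [delta [delta_gt0 delta_cover]] := uniform_inradius md hd oF cX covF.
exists (stratum md F delta); split; first by move=> I x; apply: closure_stratum_neq0.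
split; first by move=> I x i; apply: closure_stratum_mem.
split; first by move=> I J x; apply: closure_strata_comparable.
by move=> x; apply: strata_cover.
Qed.

(** * Tame atlases *)

Lemma subset_eq_or_proper (T : finType) (A B : {set T}) :
  A \subset B -> A = B \/ A \proper B.
Proof.
by move=> AB; case: (eqVneq A B) => [-> | nAB]; [left | right; rewrite properEneq nAB].
Qed.

Section TameAtlas.
Variables (X : topSpace) (N : nat) (K : atlas_data X N).
Hypothesis hK : tame_top_atlas K.

Local Notation U I := (cU (ch K I)).
Local Notation pr I := (cpr (ch K I)).
Local Notation z0 I := (czero (ch K I)).
Local Notation s I := (cs (ch K I)).
Local Notation psi I := (cpsi (ch K I)).
Local Notation Z I := (zset (ch K I)).
Local Notation dom := (aU K).
Local Notation phi := (aphi K).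
Local Notation IK := (inIK K).
Implicit Types I J L H : {set 'I_N}.

Lemma inIK_neq0 I : IK I -> I != set0.
Proof. by case. Qed.

Lemma inIK_subset I J : IK J -> I \subset J -> I != set0 -> IK I.
Proof. by move=> [_ [x Fx]] IJ I0; split=> //; exists x => i /(subsetP IJ); apply: Fx. Qed.

Lemma inIK_setU I J : IK I -> (exists p, FI K I p /\ FI K J p) -> IK (I :|: J).
Proof.
move=> hI [p [FIp FJp]]; split; last by exists p => i; rewrite inE => /orP[]; auto.
by case/set0Pn: (inIK_neq0 hI) => i iI; apply/set0Pn; exists i; rewrite inE iI.
Qed.

Lemma inIK_chart I : IK I -> is_chart (ch K I).
Proof. by case: hK => [[_ [tr _]] _] /tr []. Qed.

Lemma footprintE I : IK I -> forall p, cF (ch K I) p <-> FI K I p.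
Proof. by case: hK => [[_ [tr _]] _] /tr []. Qed.

Lemma dom_diag I x : IK I -> dom I I x.
Proof. by case: hK => [[_ [_ [diag _]]] _] /diag [dU _]; apply: dU. Qed.

Lemma phi_diag I x : IK I -> phi I I x = x.
Proof. by case: hK => [[_ [_ [diag _]]] _] /diag [_ ->]. Qed.

Lemma inIK_coord_change I J : IK I -> IK J -> I \proper J -> coord_change K I J.
Proof. by case: hK => [[_ [_ [_ [cc _]]]] _]; apply: cc. Qed.

Lemma chart_metrizable I : IK I -> metrizable (U I).
Proof. by case/inIK_chart => _ [[_ [_ ?]] _]. Qed.

Lemma chart_locally_compact I : IK I -> locally_compact (U I).
Proof. by case/inIK_chart => _ [[_ [? _]] _]. Qed.

Lemma pr_zero I x : IK I -> pr I (z0 I x) = x.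
Proof. by case/inIK_chart => _ [_ [_ [_ [_ [-> _]]]]]. Qed.

Lemma pr_section I x : IK I -> pr I (s I x) = x.
Proof. by case/inIK_chart => _ [_ [_ [_ [_ [_ [_ [-> _]]]]]]]. Qed.

Lemma section_continuous I : IK I -> continuous (s I).
Proof. by case/inIK_chart => _ [_ [_ [_ [_ [_ [? _]]]]]]. Qed.

Lemma psi_homeo I : IK I -> homeo_onto (Z I) (cF (ch K I)) (psi I).
Proof. by case/inIK_chart => _ [_ [_ [_ [_ [_ [_ [_ ?]]]]]]]. Qed.

Lemma psi_inj I x y : IK I -> Z I x -> Z I y -> psi I x = psi I y -> x = y.
Proof. by move=> /psi_homeo [[_ [inj _]] _]; apply: inj. Qed.

Lemma psi_footprint I x : IK I -> Z I x -> cF (ch K I) (psi I x).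
Proof. by move=> /psi_homeo [_ onto] Zx; apply/onto; exists x. Qed.

Lemma tame_dom_setU I J L x : IK I -> IK J -> IK L -> I \subset J -> I \subset L ->
  dom I J x /\ dom I L x <-> IK (J :|: L) /\ dom I (J :|: L) x.
Proof. by case: hK => _ [_ [tame _]] hI hJ hL IJ IL; apply: tame. Qed.

Lemma tame_phi_image I J L y : IK I -> IK J -> IK L -> I \subset J -> J \subset L ->
  (exists x, dom I L x /\ phi I J x = y) <-> dom J L y /\ aE K I J (s J y).
Proof. by case: hK => _ [_ [_ tame]] hI hJ hL IJ JL; apply: tame. Qed.

Lemma dom_restrict I J L x : IK I -> IK J -> IK L -> I \subset J -> J \subset L ->
  dom I L x -> dom I J x.
Proof.
move=> hI hJ hL IJ JL IL.
have := tame_dom_setU x hI hJ hL IJ (subset_trans IJ JL).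
by rewrite (setUidPr JL) => /proj2 /(_ (conj hL IL)) [].
Qed.

Lemma dom_phi I J L x : IK I -> IK J -> IK L -> I \subset J -> J \subset L ->
  dom I L x -> dom J L (phi I J x).
Proof.
move=> hI hJ hL IJ JL IL.
by case: (proj1 (tame_phi_image (phi I J x) hI hJ hL IJ JL) (ex_intro _ x (conj IL erefl))).
Qed.

Lemma phi_comp I J L x : IK I -> IK J -> IK L -> I \subset J -> J \subset L ->
  dom I J x -> dom J L (phi I J x) -> dom I L x /\ phi I L x = phi J L (phi I J x).
Proof.
move=> hI hJ hL IJ JL xIJ xJL.
case: (subset_eq_or_proper IJ) => [eIJ | pIJ]; first by subst J; rewrite phi_diag in xJL *.
case: (subset_eq_or_proper JL) => [eJL | pJL]; first by subst L; rewrite phi_diag.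
case: hK => [[_ [_ [_ [_ [wcoc coc]]]]] _].
have xIL : dom I L x by apply: (coc I J L hI hJ hL pIJ pJL x); split.
split=> //.
have zIJL : UIJK K I J L (pr I (z0 I x)) by rewrite pr_zero.
have zIL : dom I L (pr I (z0 I x)) by rewrite pr_zero.
have := wcoc I J L hI hJ hL pIJ pJL _ zIJL zIL.
have [_ [_ [_ [_ [prIJ _]]]]] := inIK_coord_change hI hJ pIJ.
have [_ [_ [_ [_ [prJL _]]]]] := inIK_coord_change hJ hL pJL.
have [_ [_ [_ [_ [prIL _]]]]] := inIK_coord_change hI hL (proper_trans pIJ pJL).
have prPhiIJ : pr J (aPhi K I J (z0 I x)) = phi I J x by rewrite prIJ pr_zero.
move/(congr1 (pr L)); rewrite prIL // pr_zero // prJL; last by rewrite prPhiIJ.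
by rewrite prPhiIJ => ->.
Qed.

Lemma phi_inj I J x y : IK I -> IK J -> I \subset J -> dom I J x -> dom I J y ->
  phi I J x = phi I J y -> x = y.
Proof.
move=> hI hJ IJ xIJ yIJ; case: (subset_eq_or_proper IJ) => [eIJ | pIJ].
  by subst J; rewrite !phi_diag.
by have [_ [_ [_ [[_ [inj _]] _]]]] := inIK_coord_change hI hJ pIJ; apply: inj.
Qed.

Lemma phi_zero I J x : IK I -> IK J -> I \subset J -> dom I J x -> Z I x ->
  Z J (phi I J x) /\ psi J (phi I J x) = psi I x.
Proof.
move=> hI hJ IJ xIJ Zx; case: (subset_eq_or_proper IJ) => [eIJ | pIJ].
  by subst J; rewrite !phi_diag.
by have [_ [_ [_ [_ [_ [_ [_ h]]]]]]] := inIK_coord_change hI hJ pIJ; apply: h.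
Qed.

Lemma zero_of_phi I J x : IK I -> IK J -> I \subset J -> dom I J x -> Z J (phi I J x) ->
  Z I x.
Proof.
move=> hI hJ IJ xIJ; case: (subset_eq_or_proper IJ) => [eIJ | pIJ].
  by subst J; rewrite !phi_diag.
have [_ [_ [[_ [inj _]] [_ [_ [zero_eq [s_eq _]]]]]]] := inIK_coord_change hI hJ pIJ.
rewrite /zset zero_eq // s_eq // => e.
by apply: inj; rewrite ?pr_zero ?pr_section.
Qed.

Lemma dom_of_zero I J x : IK I -> IK J -> I \subset J -> Z I x ->
  cF (ch K J) (psi I x) -> dom I J x.
Proof.
move=> hI hJ IJ Zx FJ; case: (subset_eq_or_proper IJ) => [eIJ | pIJ].
  by subst J; apply: dom_diag.
have [_ [domZ _]] := inIK_coord_change hI hJ pIJ.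
by case: (proj2 (domZ x) (conj Zx (conj (psi_footprint hI Zx) FJ))).
Qed.


(* In a tame atlas this relation is transitive and contains the relation
   defining |K| ([equiv_glued]); unlike the latter, it is witnessed in a single
   chart. *)
Definition glued I (x : U I) J (y : U J) : Prop :=
  IK I /\ IK J /\ IK (I :|: J) /\ dom I (I :|: J) x /\ dom J (I :|: J) y /\
  phi I (I :|: J) x = phi J (I :|: J) y.

Lemma glued_sym I (x : U I) J (y : U J) : glued x y -> glued y x.
Proof. by rewrite /glued setUC; case=> [? [? [? [? [? ?]]]]]; do 5 (split=> //). Qed.

Lemma glued_refl I (x : U I) : IK I -> glued x x.
Proof.
by move=> hI; rewrite /glued setUid; do 3 (split=> //); split; [|split]; try apply: dom_diag.
Qed.

Lemma glued_trans I (x : U I) J (y : U J) L (z : U L) :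
  glued x y -> glued y z -> glued x z.
Proof.
move=> [hI [hJ [hA [xA [yA exy]]]]] [_ [hL [hB [yB [zB eyz]]]]].
set A := I :|: J in hA xA yA exy; set B := J :|: L in hB yB zB eyz.
have JA : J \subset A := subsetUr _ _; have JB : J \subset B := subsetUl _ _.
case: (proj1 (tame_dom_setU y hJ hA hB JA JB) (conj yA yB)) => hM yM.
set M := A :|: B in hM yM.
have AM : A \subset M := subsetUl _ _; have BM : B \subset M := subsetUr _ _.
have yAM := dom_phi hJ hA hM JA AM yM; have yBM := dom_phi hJ hB hM JB BM yM.
have [_ eyA] := phi_comp hJ hA hM JA AM yA yAM.
have [_ eyB] := phi_comp hJ hB hM JB BM yB yBM.
rewrite -exy in yAM; rewrite eyz in yBM.
have [xM exM] := phi_comp hI hA hM (subsetUl _ _) AM xA yAM.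
have [zM ezM] := phi_comp hL hB hM (subsetUr _ _) BM zB yBM.
have ILM : I :|: L \subset M.
  by apply/subsetP => i; rewrite !inE => /orP[] ->; rewrite ?orbT.
have hIL : IK (I :|: L).
  apply: inIK_subset hM ILM _; apply/set0Pn.
  by case/set0Pn: (inIK_neq0 hI) => i iI; exists i; rewrite inE iI.
have xIL := dom_restrict hI hIL hM (subsetUl _ _) ILM xM.
have zIL := dom_restrict hL hIL hM (subsetUr _ _) ILM zM.
do 5 (split=> //).
have xILM := dom_phi hI hIL hM (subsetUl _ _) ILM xM.
have zILM := dom_phi hL hIL hM (subsetUr _ _) ILM zM.
have [_ exIL] := phi_comp hI hIL hM (subsetUl _ _) ILM xIL xILM.
have [_ ezIL] := phi_comp hL hIL hM (subsetUr _ _) ILM zIL zILM.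
apply: (phi_inj hIL hM ILM xILM zILM).
by rewrite -exIL -ezIL exM ezM exy -eyA eyB eyz.
Qed.

Lemma equiv_glued p q : equiv_pt K p q -> IK (projT1 p) \/ IK (projT1 q) ->
  glued (projT2 p) (projT2 q).
Proof.
elim=> {p q} [[I x] [J y] /= [hI [hJ [IJ [xJ exy]]]] | [I x] /= | p q _ IH
              | p q r _ IH1 _ IH2].
- rewrite /glued (setUidPr IJ); do 4 (split=> //); split; first exact: dom_diag.
  by rewrite phi_diag.
- by case=> hI; apply: glued_refl.
- by case=> h; apply: glued_sym; apply: IH; auto.
case=> h.
  have gpq := IH1 (or_introl h); case: (gpq) => [_ [hq _]].
  by apply: glued_trans gpq (IH2 (or_introl hq)).
have gqr := IH2 (or_intror h); case: (gqr) => [hq _].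
by apply: glued_trans (IH1 (or_intror hq)) gqr.
Qed.

Lemma zero_equiv I J (x : U I) (y : U J) : IK I -> IK J -> Z I x -> Z J y ->
  psi I x = psi J y -> equiv_pt K (existT _ I x) (existT _ J y).
Proof.
move=> hI hJ Zx Zy exy.
have FIx : FI K I (psi I x) by apply/(footprintE hI)/psi_footprint.
have FJx : FI K J (psi I x) by rewrite exy; apply/(footprintE hJ)/psi_footprint.
have hL := inIK_setU hI (ex_intro _ _ (conj FIx FJx)).
have FLx : cF (ch K (I :|: J)) (psi I x).
  by apply/(footprintE hL) => i; rewrite inE => /orP[]; [apply: FIx | apply: FJx].
have xL := dom_of_zero hI hL (subsetUl _ _) Zx FLx.
have yL : dom J (I :|: J) y by apply: (dom_of_zero hJ hL (subsetUr _ _) Zy); rewrite -exy.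
have [ZxL exL] := phi_zero hI hL (subsetUl _ _) xL Zx.
have [ZyL eyL] := phi_zero hJ hL (subsetUr _ _) yL Zy.
have e : phi I (I :|: J) x = phi J (I :|: J) y by apply: (psi_inj hL ZxL ZyL); rewrite exL eyL.
apply: (Relation_Operators.rst_trans _ _ _ (existT _ (I :|: J) (phi I (I :|: J) x))).
  by apply: Relation_Operators.rst_step; do 3 (split=> //); apply: subsetUl.
apply: Relation_Operators.rst_sym; apply: Relation_Operators.rst_step.
by do 3 (split=> //); apply: subsetUr.
Qed.


Lemma glued_filtration I (x : U I) J (y : U J) : glued x y ->
  aE K (I :&: J) (I :|: J) (s (I :|: J) (phi I (I :|: J) x)).
Proof.
move=> [hI [hJ [hL [xL [yL exy]]]]].
have IL : I \subset I :|: J := subsetUl _ _; have JL : J \subset I :|: J := subsetUr _ _.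
have [_ EI] := proj1 (tame_phi_image (phi I (I :|: J) x) hI hL hL IL (subxx _))
  (ex_intro _ x (conj xL erefl)).
have [_ EJ] := proj1 (tame_phi_image (phi I (I :|: J) x) hJ hL hL JL (subxx _))
  (ex_intro _ y (conj yL (esym exy))).
case: hK => _ [[_ [_ [_ [filtI _]]]] _].
exact: (proj1 (filtI I J (I :|: J) hL IL JL _) (conj EI EJ)).
Qed.

Lemma glued_disjoint I (x : U I) J (y : U J) : glued x y -> I :&: J = set0 ->
  Z I x /\ Z J y /\ psi I x = psi J y.
Proof.
move=> gxy IJ0; have := glued_filtration gxy; rewrite IJ0.
case: gxy => [hI [hJ [hL [xL [yL exy]]]]].
case: hK => _ [[_ [/(_ _ hL) [_ E0] _]] _] /E0 [u zu].
have uw : u = phi I (I :|: J) x by rewrite -(pr_zero u hL) zu pr_section.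
have Zw : Z (I :|: J) (phi I (I :|: J) x) by rewrite /zset -zu uw.
have Zx := zero_of_phi hI hL (subsetUl _ _) xL Zw.
have Zy : Z J y by apply: (zero_of_phi hJ hL (subsetUr _ _) yL); rewrite -exy.
have [_ ex] := phi_zero hI hL (subsetUl _ _) xL Zx.
have [_ ey] := phi_zero hJ hL (subsetUr _ _) yL Zy.
by do 2 (split=> //); rewrite -ex -ey exy.
Qed.

Lemma glued_through_meet I (x : U I) J (y : U J) : glued x y -> I :&: J != set0 ->
  exists v, dom (I :&: J) I v /\ dom (I :&: J) J v /\
            phi (I :&: J) I v = x /\ phi (I :&: J) J v = y.
Proof.
move=> gxy ne; have EH := glued_filtration gxy.
case: gxy => [hI [hJ [hL [xL [yL exy]]]]].
set H := I :&: J in EH ne *; set L := I :|: J in EH hL xL yL exy.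
have HI : H \subset I := subsetIl _ _; have HJ : H \subset J := subsetIr _ _.
have IL : I \subset L := subsetUl _ _; have JL : J \subset L := subsetUr _ _.
have hH : IK H := inIK_subset hI HI ne.
have [v [vL ev]] := proj2 (tame_phi_image (phi I L x) hH hL hL (subset_trans HI IL) (subxx _))
  (conj (dom_diag _ hL) EH).
have vI := dom_restrict hH hI hL HI IL vL; have vJ := dom_restrict hH hJ hL HJ JL vL.
have vIL := dom_phi hH hI hL HI IL vL; have vJL := dom_phi hH hJ hL HJ JL vL.
have [_ evI] := phi_comp hH hI hL HI IL vI vIL.
have [_ evJ] := phi_comp hH hJ hL HJ JL vJ vJL.
exists v; do 2 (split=> //); split.
  by apply: (phi_inj hI hL IL vIL xL); rewrite -evI ev.
by apply: (phi_inj hJ hL JL vJL yL); rewrite -evJ ev exy.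
Qed.

Lemma closed_phi_image H I : IK H -> IK I -> H \subset I ->
  isClosed (fun x : U I => exists v, dom H I v /\ phi H I v = x).
Proof.
move=> hH hI HI; case: hK => _ [[/(_ H I hI HI) closedE _] _].
apply: open_ext (section_continuous hI closedE) => x /=.
have image_iff := tame_phi_image x hH hI hI HI (subxx _).
split=> [nE [v [vI ev]] | nimg EHx].
  by apply: nE; case: (proj1 image_iff (ex_intro _ v (conj vI ev))).
case: (proj2 image_iff (conj (dom_diag _ hI) EHx)) => v [vI ev]; apply: nimg.
by exists v; split=> //; rewrite -[v](phi_diag _ hI) ev.
Qed.

Section Separation.
Hypothesis hX : metrizable X.

Lemma glued_separated_disjoint I J (a : U I) (b : U J) : IK I -> IK J ->
  I :&: J = set0 -> Z I a -> Z J b -> psi I a <> psi J b ->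
  closure_separated (fun x y => glued x y) (eq a) (eq b).
Proof.
move=> hI hJ IJ0 Za Zb nab.
case: (hausdorff hX nab) => D [D' [oD [oD' [Da [D'b disj]]]]].
have [[contI _] _] := psi_homeo hI; have [[contJ _] _] := psi_homeo hJ.
case: (contI D oD) => O [oO hO]; case: (contJ D' oD') => O' [oO' hO'].
case: (regular_nbhd (chart_metrizable hI) oO (proj1 (hO a Za) Da)) => Na [oNa [Naa clNa]].
case: (regular_nbhd (chart_metrizable hJ) oO' (proj1 (hO' b Zb) D'b)) => Nb [oNb [Nbb clNb]].
apply: (closure_separated_points oNa oNb Naa Nbb) => x y clx cly gxy.
case: (glued_disjoint gxy IJ0) => Zx [Zy exy].
apply: (disj (psi I x)); first exact/(hO x Zx)/clNa.
by rewrite exy; apply/(hO' y Zy)/clNb.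
Qed.

Lemma glued_separated_off_image I J (a : U I) (b : U J) : IK I -> I :&: J != set0 ->
  ~ (exists v, dom (I :&: J) I v /\ phi (I :&: J) I v = a) ->
  closure_separated (fun x y => glued x y) (eq a) (eq b).
Proof.
move=> hI ne na; have hH := inIK_subset hI (subsetIl I J) ne.
case: (regular_nbhd (chart_metrizable hI) (closed_phi_image hH hI (subsetIl _ _)) na).
move=> Na [oNa [Naa clNa]].
apply: (closure_separated_points oNa (@open_setT (U J)) Naa Logic.I) => x y clx _ gxy.
by case: (glued_through_meet gxy ne) => v [vI [_ [ex _]]]; apply: (clNa x clx); exists v.
Qed.

Lemma glued_separated_meet I J (a : U I) (b : U J) : IK I -> IK J ->
  ~~ (I \subset J) -> ~~ (J \subset I) -> I :&: J != set0 ->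
  Z I a -> Z J b -> psi I a <> psi J b ->
  closure_separated (fun x y => glued x y) (eq a) (eq b).
Proof.
move=> hI hJ nIJ nJI ne Za Zb nab.
case: (classic (exists u, dom (I :&: J) I u /\ phi (I :&: J) I u = a)) => [[u [uI ua]] | na];
  last exact: glued_separated_off_image.
case: (classic (exists u, dom (J :&: I) J u /\ phi (J :&: I) J u = b)) => [| nb]; last first.
  apply: (closure_separated_weaken (bad := fun x y => glued y x)) => [x y /glued_sym //|].
  by apply: closure_separated_sym; apply: glued_separated_off_image; rewrite // setIC.
rewrite setIC => -[u' [uJ ub]]; set H := I :&: J in ne uI ua uJ ub.
have HI : H \subset I := subsetIl _ _; have HJ : H \subset J := subsetIr _ _.
have hH := inIK_subset hI HI ne.
have nuu : u <> u'.
  move=> euu; subst u'; apply: nab.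
  have Zu : Z H u by apply: (zero_of_phi hH hI HI uI); rewrite ua.
  by rewrite -ua -ub (phi_zero hH hI HI uI Zu).2 (phi_zero hH hJ HJ uJ Zu).2.
have pHI : H \proper I.
  by rewrite properEneq HI andbT; apply: contraNneq nIJ => <-; apply: subsetIr.
have pHJ : H \proper J.
  by rewrite properEneq HJ andbT; apply: contraNneq nJI => <-; apply: subsetIl.
case: (hausdorff (chart_metrizable hH) nuu) => O [O' [oO [oO' [Ou [O'u' disj]]]]].
have [_ [_ [_ [[_ [injI openI]] _]]]] := inIK_coord_change hH hI pHI.
have [_ [_ [_ [[_ [injJ openJ]] _]]]] := inIK_coord_change hH hJ pHJ.
case: (openI O oO) => P [oP hP]; case: (openJ O' oO') => P' [oP' hP'].
have Pa : P a by apply/(hP a); exists u; [| split].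
have P'b : P' b by apply/(hP' b); exists u'; [| split].
case: (regular_nbhd (chart_metrizable hI) oP Pa) => Na [oNa [Naa clNa]].
case: (regular_nbhd (chart_metrizable hJ) oP' P'b) => Nb [oNb [Nbb clNb]].
apply: (closure_separated_points oNa oNb Naa Nbb) => x y clx cly gxy.
case: (glued_through_meet gxy ne) => v [vI [vJ [ex ey]]].
case: (proj2 (hP x (ex_intro _ v (conj vI ex))) (clNa x clx)) => v0 [v0I [Ov0 ev0]].
case: (proj2 (hP' y (ex_intro _ v (conj vJ ey))) (clNb y cly)) => v1 [v1J [O'v1 ev1]].
have ev0v : v0 = v by apply: injI; rewrite // ev0 ex.
have ev1v : v1 = v by apply: injJ; rewrite // ev1 ey.
by apply: (disj v); [rewrite -ev0v | rewrite -ev1v].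
Qed.

Lemma glued_separated I J (a : U I) (b : U J) : IK I -> IK J ->
  ~~ (I \subset J) -> ~~ (J \subset I) -> Z I a -> Z J b -> psi I a <> psi J b ->
  closure_separated (fun x y => glued x y) (eq a) (eq b).
Proof.
move=> hI hJ nIJ nJI Za Zb nab.
case: (eqVneq (I :&: J) set0) => [IJ0 | ne]; first exact: glued_separated_disjoint.
exact: glued_separated_meet.
Qed.

End Separation.

(** * The reduction *)

Section Reduction.
Hypotheses (hX : metrizable X) (cX : compact_space X).
Variable Zf : {set 'I_N} -> X -> Prop.
Hypotheses
  (closure_Zf_neq0 : forall I p, closure (Zf I) p -> I != set0)
  (closure_Zf_mem : forall I p i, closure (Zf I) p -> i \in I -> cF (ch K [set i]) p)
  (closure_Zf_comparable : forall I J p, closure (Zf I) p -> closure (Zf J) p ->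
     I \subset J \/ J \subset I)
  (Zf_cover : forall p, exists I, Zf I p).

Definition core I (x : U I) : Prop := Z I x /\ closure (Zf I) (psi I x).

Lemma closure_Zf_footprint I : IK I -> forall p, closure (Zf I) p -> cF (ch K I) p.
Proof. by move=> hI p clp; apply/(footprintE hI) => i; apply: closure_Zf_mem. Qed.

Lemma core_compact I : IK I -> compact (@core I).
Proof.
move=> hI; apply: (compact_homeo_preimage (psi_homeo hI) _ (closure_Zf_footprint hI)).
exact: compact_closed_subset cX (fun _ _ => Logic.I) (closed_closure _).
Qed.

Lemma inIK_of_Zf I p : Zf I p -> IK I.
Proof.
move=> /subset_closure clp; split; first exact: closure_Zf_neq0 clp.
by exists p => i; apply: closure_Zf_mem.
Qed.

Lemma core_of_Zf I p : Zf I p -> exists u, core u /\ psi I u = p.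
Proof.
move=> Zp; have hI := inIK_of_Zf Zp; have [_ onto] := psi_homeo hI.
case: (proj1 (onto p) (closure_Zf_footprint hI (subset_closure Zp))) => u [Zu up].
by exists u; split=> //; split=> //; rewrite up; apply: subset_closure.
Qed.

Lemma core_separated I J : IK I -> IK J -> ~~ (I \subset J) -> ~~ (J \subset I) ->
  closure_separated (fun x y => glued x y) (@core I) (@core J).
Proof.
move=> hI hJ nIJ nJI.
apply: closure_separated_compact (core_compact hI) (core_compact hJ) _.
move=> a b [Za cla] [Zb clb].
apply: glued_separated => // eab; rewrite eab in cla.
by case: (closure_Zf_comparable cla clb); apply/negP.
Qed.

Lemma exists_core_separating_nbhds : exists W : forall I J, U I -> Prop,
  (forall I J, isOpen (W I J)) /\
  (forall I J, IK I -> forall x, core x -> W I J x) /\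
  (forall I J, IK I -> IK J -> ~~ (I \subset J) -> ~~ (J \subset I) ->
     forall x y, closure (W I J) x -> closure (W J I) y -> ~ glued x y).
Proof.
pose R (IJ : {set 'I_N} * {set 'I_N}) (W : (U IJ.1 -> Prop) * (U IJ.2 -> Prop)) :=
  isOpen W.1 /\ isOpen W.2 /\
  (IK IJ.1 -> forall x, core x -> W.1 x) /\ (IK IJ.2 -> forall y, core y -> W.2 y) /\
  (IK IJ.1 -> IK IJ.2 -> ~~ (IJ.1 \subset IJ.2) -> ~~ (IJ.2 \subset IJ.1) ->
     forall x y, closure W.1 x -> closure W.2 y -> ~ glued x y).
have [Wp hWp] : exists Wp : forall IJ, (U IJ.1 -> Prop) * (U IJ.2 -> Prop),
    forall IJ, R IJ (Wp IJ).
  apply: (non_dep_dep_functional_choice functional_choice) => -[I J].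
  case: (classic (IK I /\ IK J /\ ~~ (I \subset J) /\ ~~ (J \subset I))).
    case=> hI [hJ [nIJ nJI]]; have [W [W' sepWW']] := core_separated hI hJ nIJ nJI.
    by exists (W, W'); case: sepWW' => [oW [oW' [cW [cW' sep]]]]; do 4 (split=> // ?).
  move=> nsep; exists ((fun _ => True), (fun _ => True)); do 2 (split; first exact: open_setT).
  by do 2 (split=> //); move=> hI hJ nIJ nJI; case: nsep.
exists (fun I J x => (Wp (I, J)).1 x /\ (Wp (J, I)).2 x); split; [|split].
- by move=> I J; apply: opn_I; [apply: (hWp (I, J)).1 | apply: (hWp (J, I)).2.1].
- move=> I J hI x cx.
  by split; [apply: (hWp (I, J)).2.2.1 | apply: (hWp (J, I)).2.2.2.1].
move=> I J hI hJ nIJ nJI x y clx cly.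
apply: (hWp (I, J)).2.2.2.2 => //.
  by apply: closure_mono clx => ? [].
by apply: closure_mono cly => ? [].
Qed.

Lemma exists_precompact_core_nbhds : exists P : forall I, U I -> Prop,
  forall I, isOpen (P I) /\ (IK I -> (forall x, core x -> P I x) /\ compact (closure (P I))).
Proof.
pose R I (P : U I -> Prop) :=
  isOpen P /\ (IK I -> (forall x, core x -> P x) /\ compact (closure P)).
apply: (non_dep_dep_functional_choice functional_choice _ R) => I.
case: (classic (IK I)) => [hI | nI]; last first.
  by exists (fun _ => True); split=> [|/nI //]; apply: open_setT.
have [P [oP [coreP cP]]] :=
  precompact_nbhd (chart_metrizable hI) (chart_locally_compact hI) (core_compact hI).
by exists P.
Qed.

Local Unset Implicit Arguments.
Variables (P : forall I, U I -> Prop) (W : forall I J, U I -> Prop).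
Hypotheses
  (P_open : forall I, isOpen (P I))
  (core_P : forall I, IK I -> forall x, core x -> P I x)
  (P_precompact : forall I, IK I -> compact (closure (P I)))
  (W_open : forall I J, isOpen (W I J))
  (core_W : forall I J, IK I -> forall x, core x -> W I J x)
  (W_separated : forall I J, IK I -> IK J -> ~~ (I \subset J) -> ~~ (J \subset I) ->
     forall x y, closure (W I J) x -> closure (W J I) y -> ~ glued x y).

Definition reduction_of I (x : U I) : Prop :=
  (exists p, Zf I p) /\ P I x /\ forall J, W I J x.

Lemma core_reduction_of I p : Zf I p -> forall x, core x -> reduction_of I x.
Proof.
move=> Zp x cx; have hI := inIK_of_Zf Zp.
by split; [exists p | split=> [|J]; [apply: core_P | apply: core_W]].
Qed.

Lemma reduction_of_is_reduction : is_reduction K reduction_of.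
Proof.
split; [|split].
- move=> I hI; split; [|split].
  + apply: open_constI; apply: opn_I (P_open I) _.
    by apply: open_fin_forall => J; apply: W_open.
  + apply: compact_closed_subset (P_precompact I hI) _ (closed_closure _).
    by apply: closure_mono => x [_ []].
  + move=> [x [[p Zp] _]]; have [u [cu _]] := core_of_Zf Zp.
    by exists u; split; [apply: core_reduction_of Zp _ cu | case: cu].
- move=> I J hI hJ [x [y [clx [cly exy]]]]; apply: NNPP => /not_or_and[nIJ nJI].
  have gxy := equiv_glued exy (or_introl hI).
  apply: (W_separated I J hI hJ (introN idP nIJ) (introN idP nJI)) gxy.
    by apply: closure_mono clx => ? [_ [_ /(_ J)]].
  by apply: closure_mono cly => ? [_ [_ /(_ I)]].
move=> I x hI Zx; case: (Zf_cover (psi I x)) => J Zp.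
have hJ := inIK_of_Zf Zp; have [u [cu up]] := core_of_Zf Zp.
exists J, u; split=> //; split; first exact: core_reduction_of Zp _ cu.
by apply: zero_equiv; rewrite // ?up //; case: cu.
Qed.

End Reduction.
End TameAtlas.

Theorem mainTheorem16 (X : topSpace) (N : nat) (K : atlas_data X N) :
  compact_space X -> metrizable X -> tame_top_atlas K ->
  exists V : forall I : {set 'I_N}, cU (ch K I) -> Prop, is_reduction K V.
Proof.
move=> cX hX hK; have [[[basic_charts cover] _] _] := hK.
have open_F (i : 'I_N) : isOpen (cF (ch K [set i])) by case: (basic_charts i).
have [Zf [Zf_neq0 [Zf_mem [Zf_comparable Zf_cover]]]] := footprint_strata hX cX open_F cover.
have [P hP] := exists_precompact_core_nbhds hK cX Zf_mem.
have [W [W_open [core_W W_separated]]] :=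
  exists_core_separating_nbhds hK hX cX Zf_mem Zf_comparable.
exists (reduction_of _ _ _ Zf P W); apply: reduction_of_is_reduction => //.
- by move=> I; case: (hP I).
- by move=> I /(proj2 (hP I)) [].
by move=> I /(proj2 (hP I)) [].
Qed.
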